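(* Suppose $\gamma>0$ and $\int^\infty\frac{\mathrm{d}x}{R(x)}<\infty$. Then for all $b>0$ and all $\lambda>0$, $\sum_{n=0}^\infty\lambda^nW_n(b)<\infty$.
   Context: Let $\Psi(\lambda)=\gamma\lambda+\frac{\sigma^2}{2}\lambda^2+\int_0^\infty(e^{-\lambda z}-1+\lambda z)\,\pi(\mathrm{d}z)$ for $\lambda\ge0$, with $\sigma\ge0$ and $\pi$ a measure on $(0,\infty)$ with $\int_0^\infty(z\wedge z^2)\pi(\mathrm{d}z)<\infty$. $R$ is continuous on $[0,\infty)$ and strictly positive on $(0,\infty)$. $W$ is the scale function associated with $\Psi$: $W(x)=0$ for $x<0$, $W$ continuous strictly increasing on $[0,\infty)$ with $\int_0^\infty e^{-qy}W(y)\mathrm{d}y=1/\Psi(q)$ for $q>0$. $W_0(x)=1$ and $W_{n+1}(x)=\int_x^\infty\frac{W(z-x)}{R(z)}W_n(z)\,\mathrm{d}z$ for $x\ge0$, $n\ge0$. *)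

From HB Require Import structures.
From mathcomp Require Import all_boot all_order all_algebra.
From mathcomp Require Import all_classical all_reals all_analysis.
Set Implicit Arguments. Unset Strict Implicit. Unset Printing Implicit Defensive.
Import Order.TTheory GRing.Theory Num.Theory.
Import numFieldNormedType.Exports.
Local Open Scope classical_set_scope.
Local Open Scope ring_scope.

(* The integrand is nonnegative; under the integrability hypothesis on pi
   the integral is finite, and we take its real value. *)
Definition Psi {R : realType} (gamma sigma : R)
  (pi : {measure set (measurableTypeR R) -> \bar R}) (lam : R) : R :=
  gamma * lam + sigma ^+ 2 / 2 * lam ^+ 2
  + fine (\int[pi]_(z in `]0, +oo[) (expR (- (lam * z)) - 1 + lam * z)%:E).

Fixpoint Wn {R : realType} (W Rf : R -> R) (n : nat) : R -> \bar R :=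
  match n with
  | 0%N => fun _ => 1%E
  | n'.+1 => fun x =>
      (\int[@lebesgue_measure R]_(z in `[x, +oo[)
          ((W (z - x) / Rf z)%:E * Wn W Rf n' z))%E
  end.

(* The Laplace transform of the nondecreasing scale function W is
   1/Psi(q) <= 1/(gamma q); comparing it with indicator functions shows
   0 <= W <= C := 2e/gamma on [0, +oo[.  With F(x) = int_x^oo dz/R(z), the
   identity int_x^oo F^n/R = F(x)^(n+1)/(n+1) and induction give
   W_n(x) <= C^n F(x)^n / n! for x >= b, whence
   sum_n lam^n W_n(b) <= exp(lam C F(b)) < oo. *)

From HB Require Import structures.
From mathcomp Require Import all_boot all_order all_algebra.
From mathcomp Require Import all_classical all_reals all_analysis.
From mathcomp Require Import ring lra measurable_realfun.
Set Implicit Arguments. Unset Strict Implicit. Unset Printing Implicit Defensive.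
Import Order.TTheory GRing.Theory Num.Theory.
Import numFieldNormedType.Exports.
Local Open Scope classical_set_scope.
Local Open Scope ring_scope.

Section integral_facts.
Context d (T : measurableType d) (R : realType) (mu : {measure set T -> \bar R}).
Local Open Scope ereal_scope.
Import HBNNSimple.

(* Unlike [ge0_le_integral], no measurability is required: a nonnegative
   integral is a supremum over the simple functions below the integrand.
   This matters because the iterated kernels [Wn] are not known to be
   measurable. *)
Lemma ge0_le_integral_nonmeasurable (D : set T) (f g : T -> \bar R) :
  (forall x, D x -> 0 <= f x) -> (forall x, D x -> f x <= g x) ->
  \int[mu]_(x in D) f x <= \int[mu]_(x in D) g x.
Proof.
move=> f0 fg; have g0 x : D x -> 0 <= g x.
  by move=> Dx; exact: le_trans (f0 x Dx) (fg x Dx).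
rewrite !ge0_integralE//; apply: ereal_sup_le => _ [h hf <-]; exists h => //= x.
exact: le_trans (hf x) (lee_restrict _ _).
Qed.

End integral_facts.

Lemma integral_scaled_indic_itv (R : realType) (D : set R) (a b k : R) :
  measurable D -> [set` `[a, b]] `<=` D -> a <= b -> 0 <= k ->
  (\int[@lebesgue_measure R]_(x in D) (k * \1_[set` `[a, b]] x)%:E
   = (k * (b - a))%:E)%E.
Proof.
move=> mD sD ab k0.
under eq_integral do rewrite EFinM.
rewrite ge0_integralZl_EFin//; last by apply/measurable_EFinP; exact: measurable_indic.
rewrite integral_indic// setIidl// EFinM; congr (_ * _)%E.
apply: etrans (lebesgue_measure_itv `[a, b]) _; rewrite /= lte_fin.
by move: ab; rewrite le_eqVlt => /predU1P[<-|->]; rewrite ?ltxx ?subrr -?EFinB.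
Qed.

Lemma cvgXn (R : realType) T (F : set_system T) {FF : Filter F} (f : T -> R) (a : R) n :
  f @ F --> a -> (fun x => f x ^+ n) @ F --> a ^+ n.
Proof.
move=> fa; elim: n => [|n ih].
  by rewrite expr0; under eq_fun do rewrite expr0; exact: cvg_cst.
by rewrite exprS; under eq_fun do rewrite exprS; exact: cvgM.
Qed.

Lemma nneseries_exp_coeff (R : realType) (y : R) :
  (\sum_(0 <= n <oo) (exp_coeff y n)%:E)%E = (expR y)%:E.
Proof.
rewrite /expR -EFin_lim; last exact: is_cvg_series_exp_coeff.
by congr (lim (_ @ \oo)); apply/funext => n; rewrite /= sumEFin.
Qed.

Lemma nneseries_le_expR (R : realType) (u : nat -> \bar R) (y : R) :
  (forall n, 0 <= u n <= (y ^+ n / n`!%:R)%:E)%E ->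
  (\sum_(0 <= n <oo) u n <= (expR y)%:E)%E.
Proof.
by move=> u_le; rewrite -nneseries_exp_coeff; apply: lee_nneseries => n _;
  case/andP: (u_le n).
Qed.

Lemma exists_expRN_lt_inv (R : realType) (c K r q0 : R) :
  0 < c -> 0 < r -> 0 <= K -> exists2 q, q0 <= q & K * expR (- (q * r)) < c / q.
Proof.
(* expR (q r) > (q r)^2 / 2, so any q >= 2 K / (c r^2) works. *)
move=> c0 r0 K0; set q := Num.max q0 1 + 2 * K / (c * r ^+ 2).
have Kq0 : 0 <= 2 * K / (c * r ^+ 2) by rewrite divr_ge0 ?mulr_ge0 ?exprn_ge0 // ltW.
have m1 : 1 <= Num.max q0 1 by rewrite le_max lexx orbT.
have q1 : 1 <= q by rewrite /q; lra.
have q0' : 0 < q by lra.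
have m0 : q0 <= Num.max q0 1 by rewrite le_max lexx.
exists q; first by rewrite /q; lra.
have Kq : K <= c * r ^+ 2 / 2 * q.
  have : 2 * K / (c * r ^+ 2) <= q by rewrite /q; lra.
  rewrite ler_pdivrMr ?mulr_gt0 ?exprn_gt0 //; lra.
have E := @expR_ge1Dxn R (q * r) 1 (mulr_ge0 (ltW q0') (ltW r0)).
rewrite expRN ltr_pdivlMr // mulrAC ltr_pdivrMr ?expR_gt0 //.
apply: (le_lt_trans (y := c * (q * r) ^+ 2 / 2)).
  by rewrite (le_trans (ler_wpM2r (ltW q0') Kq)) // le_eqVlt; apply/predU1P; left; ring.
rewrite -mulrA ltr_pM2l // (lt_le_trans _ E) // ltr_pwDl //.
Qed.

Section laplace_transform.
Variables (R : realType) (f : R -> R).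
Hypothesis f_nd : {in `[0, +oo[ &, {homo f : x y / x <= y}}.
Local Notation mu := (@lebesgue_measure R).
Local Notation lap q := (fun y => (expR (- (q * y)) * f y)%:E).

Lemma laplace_le_bounded (K : R) :
  (forall y, 0 <= y -> 0 <= f y) ->
  (forall q, 0 < q -> (\int[mu]_(y in `[0%R, +oo[) lap q y <= (K / q)%:E)%E) ->
  forall x, 0 <= x -> f x <= 2 * expR 1 * K.
Proof.
move=> f0 fK x x0; set q := (2 * x + 1)^-1.
have q0 : 0 < q by rewrite invr_gt0; lra.
have e0 : 0 < expR 1 :> R := expR_gt0 1.
have : ((f x / expR 1 * (2 * x + 1 - x))%:E <= (K / q)%:E)%E.
  apply: le_trans (fK q q0).
  rewrite -(@integral_scaled_indic_itv _ `[0%R, +oo[) //; last 3 first.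
  - by move=> y /=; rewrite !in_itv /= andbT => /andP[/(le_trans x0)].
  - lra.
  - by rewrite divr_ge0 ?f0 // ltW.
  apply: ge0_le_integral_nonmeasurable => y; rewrite /= in_itv /= andbT => y0.
    by rewrite lee_fin mulr_ge0 ?indic_ge0 // divr_ge0 ?f0 // ltW.
  rewrite lee_fin indicE; case: (boolP (y \in _)) => [|_]; last first.
    by rewrite mulr0 mulr_ge0 ?expR_ge0 ?f0.
  rewrite inE /= in_itv /= => /andP[xy y2x]; rewrite mulr1 mulrC.
  apply: ler_pM; [by rewrite invr_ge0 ltW | exact: f0 | |]; last first.
    by apply: f_nd; rewrite ?in_itv /= ?andbT.
  rewrite -expRN ler_expR lerN2 /q -[leRHS](mulVf (x := 2 * x + 1)); last lra.
  by rewrite ler_wpM2l // invr_ge0; lra.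
rewrite lee_fin /q invrK => h.
have fxe : f x * (x + 1) <= expR 1 * K * (2 * x + 1).
  have -> : f x * (x + 1) = expR 1 * (f x / expR 1 * (2 * x + 1 - x)).
    by field; rewrite gt_eqF.
  by rewrite -(mulrA (expR 1)) ler_wpM2l // ltW.
have fx0 : 0 <= f x * (x + 1) by rewrite mulr_ge0 ?f0 //; lra.
rewrite -(ler_pM2r (_ : 0 < x + 1)); last lra.
move: fxe fx0; set E := expR 1 * K; rewrite -[2 * _ * K]mulrA -/E; nra.
Qed.

Hypothesis f_cont : {within `[0, +oo[, continuous f}.

Let measurable_lap (q : R) : measurable_fun (`[0%R, +oo[ : set R) (lap q).
Proof.
apply/measurable_EFinP/measurable_funM; last first.
  exact: subspace_continuous_measurable_fun f_cont.
by apply: measurableT_comp => //; apply: measurableT_comp.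
Qed.

Lemma laplace_pos_part_le {r q : R} : 1 <= q -> 0 <= r ->
  (forall y, 0 <= y < r -> f y <= 0) ->
  (\int[mu]_(y in `[0%R, +oo[) (lap q)^\+ y <=
   (expR (- ((q - 1) * r)))%:E * \int[mu]_(y in `[0%R, +oo[) (lap 1)^\+ y)%E.
Proof.
move=> q1 r0 f_le0.
rewrite -ge0_integralZl_EFin //; last exact: (measurable_funepos (measurable_lap 1)).
apply: ge0_le_integral_nonmeasurable => y; rewrite /= in_itv /= andbT => y0.
  exact: funepos_ge0.
rewrite !funeposE -!EFin_max -EFinM lee_fin.
have [fy0|fy0] := leP (f y) 0.
  rewrite max_r ?mulr_ge0_le0 ?expR_ge0 //.
  by rewrite mulr_ge0 ?expR_ge0 // le_max lexx orbT.
have ry : r <= y by rewrite leNgt; apply/negP => yr; have := f_le0 y; lra.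
rewrite !max_l ?mulr_ge0 ?expR_ge0 ?(ltW fy0) // mulrA -expRD ler_pM2r //.
rewrite ler_expR; have : (q - 1) * r <= (q - 1) * y by rewrite ler_wpM2l // subr_ge0.
lra.
Qed.

Lemma laplace_neg_part_ge {c q : R} : 0 < q -> 0 <= c ->
  (forall y, 0 <= y <= q^-1 -> f y <= - c) ->
  ((c / expR 1 / q)%:E <= \int[mu]_(y in `[0%R, +oo[) (lap q)^\- y)%E.
Proof.
move=> q0 c0 f_le.
have e0 : 0 < expR 1 :> R := expR_gt0 1.
have -> : c / expR 1 / q = c / expR 1 * (q^-1 - 0) by rewrite subr0.
rewrite -(@integral_scaled_indic_itv _ `[0%R, +oo[) //; last 3 first.
- by move=> y /=; rewrite !in_itv /= => /andP[-> _].
- by rewrite invr_ge0 ltW.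
- by rewrite divr_ge0 // ltW.
apply: ge0_le_integral_nonmeasurable => y; rewrite /= in_itv /= andbT => y0.
  by rewrite lee_fin mulr_ge0 ?indic_ge0 // divr_ge0 // ltW.
rewrite funenegE -EFin_max lee_fin indicE.
case: (boolP (y \in _)) => [|_]; last by rewrite mulr0 le_max lexx orbT.
rewrite inE /= in_itv /= => /andP[_ yq]; rewrite mulr1 le_max; apply/orP; left.
rewrite -mulrN mulrC; apply: ler_pM.
- by rewrite invr_ge0 ltW.
- exact: c0.
- rewrite -expRN ler_expR lerN2 -(@mulfV _ q) ?gt_eqF //.
  by rewrite ler_wpM2l // ltW.
- by have := f_le y; rewrite y0 yq; lra.
Qed.

(* If f 0 < 0 then f <= - c on some [0, t]: the negative part of the
   transform is at least of order 1/q, whereas its positive part lives on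
   [t, +oo[ and decays like expR (- q t). *)
Lemma laplace_gt0_ge0_at0 :
  (forall q, 0 < q ->
    exists2 L, 0 < L & (\int[mu]_(y in `[0%R, +oo[) lap q y = L%:E)%E) ->
  0 <= f 0.
Proof.
move=> lap_gt0; rewrite leNgt; apply/negP => f0_lt0.
have [t t0 ft_lt0] : exists2 t, 0 < t & f t < 0.
  have /continuous_within_itvcyP[_ f0] := f_cont.
  near (0 : R)^'+ => t; exists t; near: t; first exact: nbhs_right_gt.
  exact: cvgr_lt f0 _ f0_lt0.
set c := - f t; have c0 : 0 < c by rewrite oppr_gt0.
have f_le_c y : 0 <= y <= t -> f y <= - c.
  by case/andP=> y0 yt; rewrite opprK; apply: f_nd; rewrite ?in_itv /= ?andbT // ltW.
have [L1 _ lap1E] := lap_gt0 1 ltr01.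
have : (\int[mu]_(y in `[0%R, +oo[) lap 1 y)%E \is a fin_num by rewrite lap1E.
rewrite integralE fin_numB => /andP[/fineK p1E _]; set p := fine _ in p1E.
have p0 : 0 <= p.
  by rewrite -lee_fin p1E; apply: integral_ge0 => y _; exact: funepos_ge0.
have [q qge qlt] := exists_expRN_lt_inv (1 + t^-1) (divr_gt0 c0 (expR_gt0 1)) t0
  (mulr_ge0 (expR_ge0 t) p0).
have t'0 : 0 < t^-1 by rewrite invr_gt0.
have q1 : 1 <= q by lra.
have q0 : 0 < q by lra.
have qt : q^-1 <= t by rewrite -[t]invrK lef_pV2 ?posrE //; lra.
have f_le0 y : 0 <= y < t -> f y <= 0.
  by case/andP=> y0 yt; have := f_le_c y; rewrite y0 ltW //=; lra.
have f_le_c_q y : 0 <= y <= q^-1 -> f y <= - c.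
  by case/andP=> y0 yq; apply: f_le_c; rewrite y0 (le_trans yq qt).
have [L L0] := lap_gt0 q q0; rewrite integralE => lapE.
have := leeB (laplace_pos_part_le q1 (ltW t0) f_le0)
  (laplace_neg_part_ge q0 (ltW c0) f_le_c_q).
rewrite lapE -p1E -EFinM -EFinB lee_fin.
have -> : expR (- ((q - 1) * t)) = expR t * expR (- (q * t)).
  by rewrite -expRD; congr expR; ring.
rewrite mulrAC; lra.
Unshelve. all: by end_near. Qed.

End laplace_transform.

Section primitive.
Variables (R : realType) (g : R -> R) (c : R).
Hypothesis g_cont : forall t, 0 < t -> {for t, continuous g}.
Hypothesis g_ge0 : forall t, 0 < t -> 0 <= g t.
Hypothesis c_gt0 : 0 < c.
Local Notation mu := (@lebesgue_measure R).
Local Notation G x := (parameterized_integral mu c x g).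

Let g_integrable y : mu.-integrable `[c, y] (EFin \o g).
Proof.
apply: continuous_compact_integrable; first exact: segment_compact.
apply: continuous_in_subspaceT => t; rewrite inE /= in_itv /= => /andP[ct _].
by apply: g_cont; exact: lt_le_trans ct.
Qed.

Let g_ge0_c t : c <= t -> (0 <= (g t)%:E)%E.
Proof. by move=> ct; rewrite lee_fin g_ge0 // (lt_le_trans c_gt0). Qed.

Lemma parameterized_integral_derive {x} :
  c < x -> derivable (fun y => G y) x 1 /\ derive1 (fun y => G y) x = g x.
Proof.
move=> cx; apply: (@continuous_FTC1_closed R g c x (x + 1)) => //.
- by rewrite ltrDl.
- by apply: g_cont; exact: lt_trans cx.
Qed.

Lemma nondecreasing_parameterized_integral : {homo (fun x => G x) : x y / x <= y}.
Proof.
move=> x y xy; rewrite /parameterized_integral /Rintegral.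
apply: fine_le; [exact: integrable_fin_num|exact: integrable_fin_num|].
have /integrableP[mg _] := g_integrable y.
apply: ge0_subset_integral => //.
  by move=> t; rewrite /= in_itv /= => /andP[ct _]; exact: g_ge0_c.
by apply: subset_itvl; rewrite bnd_simp.
Qed.

Lemma parameterized_integral_ubound {a} : c <= a ->
  (\int[mu]_(x in `[a, +oo[) (g x)%:E < +oo)%E -> has_ubound (range (fun x => G x)).
Proof.
move=> ca ga.
have mg : measurable_fun (`[c, +oo[ : set R) (EFin \o g).
  apply/measurable_EFinP; apply: subspace_continuous_measurable_fun => //.
  apply: continuous_in_subspaceT => t; rewrite inE /= in_itv /= andbT => ct.
  by apply: g_cont; exact: lt_le_trans ct.
have gc : (\int[mu]_(x in `[c, +oo[) (g x)%:E < +oo)%E.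
  have cE : [set` `[c, +oo[] = [set` `[c, a[] `|` [set` `[a, +oo[] :> set R.
    by apply: itv_bndbnd_setU; rewrite bnd_simp.
  rewrite cE ge0_integral_setU //; last 3 first.
  - by rewrite -cE.
  - by move=> t; rewrite -cE /= in_itv /= andbT; exact: g_ge0_c.
  - apply/disj_setPS => t [] /=; rewrite !in_itv /= => /andP[_ ta] /andP[aT _].
    by move: (lt_le_trans ta aT); rewrite ltxx.
  apply: lte_add_pinfty => //.
  apply: (@le_lt_trans _ _ (\int[mu]_(x in `[c, a]) (g x)%:E)%E).
  - have /integrableP[mga _] := g_integrable a.
    apply: ge0_subset_integral => //; last by apply: subset_itvl; rewrite bnd_simp.
    by move=> t; rewrite /= in_itv /= => /andP[ct _]; exact: g_ge0_c.
  - by rewrite ltey_eq integrable_fin_num.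
exists (fine (\int[mu]_(x in `[c, +oo[) (g x)%:E)%E) => _ [x _ <-].
rewrite /parameterized_integral /Rintegral; apply: fine_le.
- exact: integrable_fin_num.
- rewrite ge0_fin_numE // integral_ge0 // => t.
  by rewrite /= in_itv /= andbT; exact: g_ge0_c.
- apply: ge0_subset_integral => //; last by apply: subset_itvl; rewrite bnd_simp.
  by move=> t; rewrite /= in_itv /= andbT; exact: g_ge0_c.
Qed.

Lemma parameterized_integral_tail_pow (K D x : R) n :
  G z @[z --> +oo] --> K -> (forall z, G z <= K) -> c < x -> 0 <= D ->
  (\int[mu]_(z in `[x, +oo[) (D * (K - G z) ^+ n * g z)%:E
   = (D / n.+1%:R * (K - G x) ^+ n.+1)%:E)%E.
Proof.
move=> GK G_le cx D0.
have dG z : c < z -> is_derive z 1 (fun y => G y) (g z).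
  by move=> cz; have [dz <-] := parameterized_integral_derive cz; rewrite derive1E.
pose Phi := (- (D / n.+1%:R)) \*: ((cst K - (fun y => G y)) ^+ n.+1).
have PhiE z : Phi z = - (D / n.+1%:R) * (K - G z) ^+ n.+1 by rewrite /Phi /= exprfctE.
have dPhi z : c < z -> is_derive z 1 Phi (D * (K - G z) ^+ n * g z).
  move=> cz; have dGz := dG z cz; apply: is_derive_eq.
  by rewrite [in LHS]/GRing.scale /= sub0r; field.
have cG z : c < z -> {for z, continuous (fun y => G y)}.
  move=> cz; apply: differentiable_continuous; apply/derivable1_diffP.
  exact: (parameterized_integral_derive cz).1.
rewrite (@ge0_continuous_FTC2y R _ Phi x 0).
- by rewrite PhiE sub0e -EFinN mulNr opprK.
- move=> z xz; have cz : c < z := lt_le_trans cx xz.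
  by rewrite !mulr_ge0 ?exprn_ge0 ?subr_ge0 ?g_ge0 // (lt_trans c_gt0).
- apply: continuous_in_subspaceT => z; rewrite inE /= in_itv /= andbT => xz.
  have cz : c < z := lt_le_trans cx xz.
  apply: cvgM; last by apply: g_cont; exact: lt_trans cz.
  apply: cvgM; first exact: cvg_cst.
  by apply: cvgXn; apply: cvgB; [exact: cvg_cst | exact: cG].
- rewrite (_ : Phi = fun z => - (D / n.+1%:R) * (K - G z) ^+ n.+1); last first.
    by apply/funext => z; exact: PhiE.
  have -> : 0 = - (D / n.+1%:R) * 0 ^+ n.+1 :> R by rewrite expr0n mulr0.
  apply: cvgMr; apply: cvgXn.
  by rewrite -(subrr K); apply: cvgB => //; exact: cvg_cst.
- by move=> z xz; have := dPhi z (lt_trans cx xz).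
- apply: cvg_at_right_filter; apply: differentiable_continuous; apply/derivable1_diffP.
  by have := dPhi x cx.
- move=> z; rewrite in_itv /= andbT => xz.
  by have dPz := dPhi z (lt_trans cx xz); rewrite derive1E derive_val.
Qed.

Lemma exists_tail_primitive a : c <= a ->
  (\int[mu]_(x in `[a, +oo[) (g x)%:E < +oo)%E ->
  exists F : R -> R, forall n D x, c < x -> 0 <= D ->
    (\int[mu]_(z in `[x, +oo[) (D * F z ^+ n * g z)%:E
     = (D / n.+1%:R * F x ^+ n.+1)%:E)%E.
Proof.
move=> ca ga; have ub := parameterized_integral_ubound ca ga.
pose K := sup (range (fun x => G x)).
have G_le z : G z <= K.
  have supG : has_sup (range (fun x => G x)) by split=> //; exists (G 0), 0.
  by apply: sup_upper_bound => //; exists z.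
exists (fun z => K - G z) => n D x cx D0.
apply: parameterized_integral_tail_pow => //.
exact: nondecreasing_cvgr nondecreasing_parameterized_integral ub.
Qed.
End primitive.

Lemma Psi_ge_drift (R : realType) (gamma sigma : R)
    (pi : {measure set (measurableTypeR R) -> \bar R}) (q : R) :
  gamma * q <= Psi gamma sigma pi q.
Proof.
rewrite /Psi -addrA lerDl addr_ge0//; first by rewrite mulr_ge0 ?divr_ge0 ?sqr_ge0.
apply: fine_ge0; apply: integral_ge0 => z _; rewrite lee_fin.
by have := expR_ge1Dx (- (q * z)); lra.
Qed.

Lemma scale_fun_ge0_le (R : realType) (gamma sigma : R)
    (pi : {measure set (measurableTypeR R) -> \bar R}) (W : R -> R) :
  {within `[0, +oo[, continuous W} ->
  {in `[0, +oo[ &, forall x y, x < y -> W x < W y} ->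
  (forall q, 0 < q ->
     (\int[@lebesgue_measure R]_(y in `[0%R, +oo[) (expR (- (q * y)) * W y)%:E
      = ((Psi gamma sigma pi q)^-1)%:E)%E) ->
  0 < gamma ->
  forall y, 0 <= y -> 0 <= W y <= 2 * expR 1 * gamma^-1.
Proof.
move=> W_cont W_inc lapW gamma_gt0; have W_nd := ltW_homo_in W_inc.
have Psi_ge q : 0 < q -> 0 < gamma * q <= Psi gamma sigma pi q.
  by move=> q0; rewrite mulr_gt0 ?Psi_ge_drift.
have W0 : 0 <= W 0.
  apply: (laplace_gt0_ge0_at0 W_nd W_cont) => q q0.
  exists (Psi gamma sigma pi q)^-1; last exact: lapW.
  by have /andP[g0 gP] := Psi_ge q q0; rewrite invr_gt0 (lt_le_trans g0).
have W_ge0 y : 0 <= y -> 0 <= W y.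
  by move=> y0; apply: le_trans W0 (W_nd _ _ _ _ y0); rewrite ?in_itv /= ?andbT.
move=> y y0; rewrite W_ge0 //=; apply: (laplace_le_bounded W_nd W_ge0) y0 => q q0.
rewrite lapW // lee_fin; have /andP[g0 gP] := Psi_ge q q0.
by rewrite -invfM lef_pV2 ?posrE // (lt_le_trans g0).
Qed.

Lemma exists_inv_tail (R : realType) (Rf : R -> R) (a b : R) :
  {within `[0, +oo[, continuous Rf} -> (forall x, 0 < x -> 0 < Rf x) -> 0 < a ->
  (\int[@lebesgue_measure R]_(x in `[a, +oo[) ((Rf x)^-1)%:E < +oo)%E -> 0 < b ->
  exists F : R -> R, forall n D x, b <= x -> 0 <= D ->
    (\int[@lebesgue_measure R]_(z in `[x, +oo[) (D * F z ^+ n / Rf z)%:E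
     = (D / n.+1%:R * F x ^+ n.+1)%:E)%E.
Proof.
move=> Rf_cont Rf_gt0 a_gt0 Rf_int b_gt0.
have Rfinv_cont t : 0 < t -> {for t, continuous (fun x => (Rf x)^-1)}.
  move=> t0; apply: continuousV; first by rewrite gt_eqF ?Rf_gt0.
  by have /continuous_within_itvcyP[+ _] := Rf_cont; apply; rewrite in_itv /= andbT.
have Rfinv_ge0 t : 0 < t -> 0 <= (Rf t)^-1 by move=> t0; rewrite invr_ge0 ltW ?Rf_gt0.
set c := Num.min (b / 2) a.
have c_gt0 : 0 < c by rewrite lt_min a_gt0 divr_gt0.
have c_le_a : c <= a by rewrite ge_min lexx orbT.
have c_lt_b : c < b by rewrite gt_min ltr_pdivrMr //; apply/orP; left; lra.
have [F F_tail] := exists_tail_primitive Rfinv_cont Rfinv_ge0 c_gt0 c_le_a Rf_int.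
by exists F => n D x bx; exact: F_tail (lt_le_trans c_lt_b bx).
Qed.

Section Wn_bound.
Variables (R : realType) (W Rf F : R -> R) (C b : R).
Hypothesis W_ge0_le : forall y, 0 <= y -> 0 <= W y <= C.
Hypothesis Rf_gt0 : forall z, b <= z -> 0 < Rf z.
Hypothesis F_tail : forall n D x, b <= x -> 0 <= D ->
  (\int[@lebesgue_measure R]_(z in `[x, +oo[) (D * F z ^+ n / Rf z)%:E
   = (D / n.+1%:R * F x ^+ n.+1)%:E)%E.

Lemma Wn_ge0_le_pow n x : b <= x ->
  (0 <= Wn W Rf n x <= (C ^+ n / n`!%:R * F x ^+ n)%:E)%E.
Proof.
elim: n x => [|n IH] x bx; first by rewrite /= !expr0 fact0 invr1 !mulr1 lexx lee01.
have kernel_ge0_le z : x <= z -> 0 <= W (z - x) / Rf z <= C / Rf z.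
  move=> xz; have Rz := Rf_gt0 (le_trans bx xz).
  have /andP[W0 WC] : 0 <= W (z - x) <= C by apply: W_ge0_le; rewrite subr_ge0.
  by rewrite divr_ge0 ?(ltW Rz) //= ler_pM2r ?invr_gt0.
have integrand_ge0 z : x <= z -> (0 <= (W (z - x) / Rf z)%:E * Wn W Rf n z)%E.
  move=> xz; have /andP[k0 _] := kernel_ge0_le z xz.
  by rewrite mule_ge0 ?lee_fin //; case/andP: (IH z (le_trans bx xz)).
apply/andP; split.
  by apply: integral_ge0 => z; rewrite /= in_itv /= andbT; exact: integrand_ge0.
apply: (@le_trans _ _ (\int[@lebesgue_measure R]_(z in `[x, +oo[)
    (C ^+ n.+1 / n`!%:R * F z ^+ n / Rf z)%:E)%E).
  apply: ge0_le_integral_nonmeasurable => z; rewrite /= in_itv /= andbT => xz.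
    exact: integrand_ge0.
  have /andP[k0 kC] := kernel_ge0_le z xz.
  have /andP[Wn0 WnF] := IH z (le_trans bx xz).
  apply: le_trans (lee_pmul _ Wn0 (_ : _ <= (C / Rf z)%:E)%E WnF) _;
    rewrite ?lee_fin //.
  rewrite exprS le_eqVlt; apply/predU1P; left.
  by field; rewrite pnatr_eq0 -lt0n fact_gt0 /= gt_eqF // Rf_gt0 // (le_trans bx).
have C0 : 0 <= C by have /andP[W0 WC] := W_ge0_le (lexx 0); exact: le_trans WC.
rewrite F_tail // ?divr_ge0 ?exprn_ge0 //.
rewrite lee_fin factS natrM le_eqVlt; apply/predU1P; left; field.
by rewrite pnatr_eq0 -lt0n fact_gt0 /=; apply/negP => /eqP; have := ler0n R n; lra.
Qed.

Lemma nneseries_Wn_lt_pinfty lam : 0 <= lam ->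
  (\sum_(0 <= n <oo) ((lam ^+ n)%:E * Wn W Rf n b) < +oo)%E.
Proof.
move=> lam0.
apply: le_lt_trans (nneseries_le_expR (y := lam * C * F b) _) (ltry _) => n.
have /andP[Wn0 WnF] := Wn_ge0_le_pow n (lexx b).
have lam_n : (0 <= (lam ^+ n)%:E)%E by rewrite lee_fin exprn_ge0.
rewrite mule_ge0 //=; apply: le_trans (lee_pmul lam_n Wn0 (lexx _) WnF) _.
by rewrite -EFinM lee_fin !exprMn le_eqVlt; apply/predU1P; left; ring.
Qed.
End Wn_bound.

Theorem proposition4p5 (R : realType) (gamma sigma : R)
  (pi : {measure set (measurableTypeR R) -> \bar R}) (Rf W : R -> R) :
  0 <= sigma ->
  pi [set` `]-oo, 0]] = 0%E ->
  (\int[pi]_(z in `]0%R, +oo[) (Num.min z (z ^+ 2))%:E < +oo)%E ->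
  {within `[0, +oo[, continuous Rf} ->
  (forall x, 0 < x -> 0 < Rf x) ->
  (forall x, x < 0 -> W x = 0) ->
  {within `[0, +oo[, continuous W} ->
  {in `[0, +oo[ &, forall x y, x < y -> W x < W y} ->
  (forall q, 0 < q ->
     (\int[@lebesgue_measure R]_(y in `[0%R, +oo[) (expR (- (q * y)) * W y)%:E
      = ((Psi gamma sigma pi q)^-1)%:E)%E) ->
  0 < gamma ->
  (exists a, 0 < a /\
     (\int[@lebesgue_measure R]_(x in `[a%R, +oo[) ((Rf x)^-1)%:E < +oo)%E) ->
  forall b lam, 0 < b -> 0 < lam ->
    (\sum_(0 <= n <oo) ((lam ^+ n)%:E * Wn W Rf n b) < +oo)%E.
Proof.
move=> _ _ _ Rf_cont Rf_gt0 _ W_cont W_inc lapW gamma_gt0 [a [a_gt0 Rf_int]].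
move=> b lam b_gt0 lam_gt0.
have [F F_tail] := exists_inv_tail Rf_cont Rf_gt0 a_gt0 Rf_int b_gt0.
have W_bounded := scale_fun_ge0_le W_cont W_inc lapW gamma_gt0.
have Rf_gt0_b z : b <= z -> 0 < Rf z.
  by move=> bz; rewrite Rf_gt0 // (lt_le_trans b_gt0).
exact: (nneseries_Wn_lt_pinfty W_bounded Rf_gt0_b F_tail (ltW lam_gt0)).
Qed.
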